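(* Let $S$ be a semigroup that satisfies the F\o lner condition but not the proper F\o lner condition. Then there is $a\in S$ with $|Sa|<\infty$.
   Context: $S$ satisfies the F\o lner condition if for every $\varepsilon>0$ and finite $\mathcal F\subseteq S$ there is a finite non-empty $F\subseteq S$ with $|sF\cup F|\le(1+\varepsilon)|F|$ for all $s\in\mathcal F$ (where $sF=\{sf:f\in F\}$). $S$ satisfies the proper F\o lner condition if moreover for every $\varepsilon>0$, finite $\mathcal F\subseteq S$ and finite $A\subseteq S$, such an $F$ can be chosen with $A\subseteq F$. $Sa=\{sa:s\in S\}$. *)

(* semigroups are arbitrary (possibly infinite) types with an
   associative operation; finite subsets are represented by duplicate-free lists. *)
From Stdlib Require Import Reals List.
Import ListNotations.
Open Scope R_scope.

Definition card_is {S : Type} (A : S -> Prop) (n : nat) : Prop :=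
  exists l : list S, NoDup l /\ (forall x, A x <-> In x l) /\ length l = n.

Definition is_finite {S : Type} (A : S -> Prop) : Prop :=
  exists l : list S, forall x, A x <-> In x l.

Definition translate_union {S : Type} (mul : S -> S -> S) (s : S) (F : list S)
  : S -> Prop :=
  fun x => In x F \/ exists f, In f F /\ x = mul s f.

Definition folner_set {S : Type} (mul : S -> S -> S) (eps : R) (calF F : list S)
  : Prop :=
  NoDup F /\ F <> [] /\
  forall s, In s calF ->
    exists n, card_is (translate_union mul s F) n /\
              INR n <= (1 + eps) * INR (length F).

Definition folner_condition {S : Type} (mul : S -> S -> S) : Prop :=
  forall (eps : R), 0 < eps -> forall calF : list S,
    exists F : list S, folner_set mul eps calF F.

Definition proper_folner_condition {S : Type} (mul : S -> S -> S) : Prop :=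
  forall (eps : R), 0 < eps -> forall calF A : list S,
    exists F : list S, folner_set mul eps calF F /\ incl A F.

From Stdlib Require Import Reals List.
From Stdlib Require Import Classical ClassicalEpsilon Lra Lia Arith.
Import ListNotations.
Open Scope R_scope.

(* Assume every orbit [S a] is infinite; we show
   that the Følner condition implies the proper one.  It suffices to find an (eps/2)-Følner set G for calF with |G|
   large compared to |A|: then G ∪ A is an eps-Følner set containing A
   ([folner_set_absorb]).  Choose M with 4|A| <= eps*M and delta <= eps/2 with
   delta*M <= 1.  A delta-Følner set F with |F| < M cannot grow at all under
   translation, so it is invariant ([small_folner_set_invariant]).  Starting from
   the empty invariant set, we repeatedly enlarge a calF-invariant set G: since
   each orbit [S g] is infinite, some u moves g out of G; a delta-Følner set for
   calF together with these u is either large (and we are done) or invariant and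
   not contained in G, so its union with G is a larger invariant set
   ([grow_invariant_set]).  After M steps we either met a large Følner set or
   built an invariant set of size >= M, which is itself a Følner set
   ([invariant_folner_set]). *)

Definition deq {S : Type} : forall x y : S, {x = y} + {x <> y} :=
  fun x y => excluded_middle_informative (x = y).

Lemma card_is_of_list {S : Type} (P : S -> Prop) (L : list S) :
  (forall x, P x <-> In x L) -> card_is P (length (nodup deq L)).
Proof.
  intros HL. exists (nodup deq L).
  split; [apply NoDup_nodup | split; [|reflexivity]].
  intros x. rewrite nodup_In. apply HL.
Qed.

Lemma translate_union_list {S : Type} (mul : S -> S -> S) (s : S) (F : list S) :
  forall x, translate_union mul s F x <-> In x (F ++ map (mul s) F).
Proof.
  intros x; unfold translate_union; rewrite in_app_iff, in_map_iff; split.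
  - intros [Hx | [f [Hf ->]]]; [left | right; exists f]; auto.
  - intros [Hx | [f [<- Hf]]]; [left | right; exists f]; auto.
Qed.

Definition invariant {S : Type} (mul : S -> S -> S) (T G : list S) : Prop :=
  forall s g, In s T -> In g G -> In (mul s g) G.

Lemma folner_set_mono {S : Type} (mul : S -> S -> S) (delta eps : R) (T T' F : list S) :
  delta <= eps -> incl T' T -> folner_set mul delta T F -> folner_set mul eps T' F.
Proof.
  intros Hde HT [HnF [HneF HcF]]. split; [exact HnF | split; [exact HneF|]].
  intros s Hs. destruct (HcF s (HT s Hs)) as [m [Hm Hle]].
  exists m. split; [exact Hm|].
  assert (0 <= INR (length F)) by apply pos_INR. nra.
Qed.

Lemma invariant_folner_set {S : Type} (mul : S -> S -> S) (eps : R) (T G : list S) :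
  0 <= eps -> NoDup G -> G <> [] -> invariant mul T G -> folner_set mul eps T G.
Proof.
  intros He HnG HneG Hinv. split; [exact HnG | split; [exact HneG|]].
  intros s Hs. exists (length G). split.
  - exists G. split; [exact HnG | split; [|reflexivity]].
    intros x; unfold translate_union.
    split; [intros [Hx | [f [Hf ->]]]; auto | auto].
  - assert (0 <= INR (length G)) by apply pos_INR. nra.
Qed.

Lemma translate_union_no_growth {S : Type} (mul : S -> S -> S) (s : S) (F : list S) (m : nat) :
  NoDup F -> card_is (translate_union mul s F) m -> (m <= length F)%nat ->
  forall f, In f F -> In (mul s f) F.
Proof.
  intros HnF [l [Hl [HPl Hml]]] Hle f Hf. subst m.
  assert (Hinc : incl F l) by (intros x Hx; apply HPl; left; exact Hx).
  apply (NoDup_length_incl HnF Hle Hinc).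
  apply HPl. right. exists f. auto.
Qed.

(* A delta-Følner set with delta*|F| < 1 is invariant: |sF ∪ F| < |F| + 1. *)
Lemma small_folner_set_invariant {S : Type} (mul : S -> S -> S) (delta : R) (T F : list S) :
  folner_set mul delta T F -> delta * INR (length F) < 1 -> invariant mul T F.
Proof.
  intros [HnF [_ HcF]] Hsmall s f Hs Hf.
  destruct (HcF s Hs) as [m [Hm Hle]].
  apply (translate_union_no_growth mul s F m HnF Hm); [|exact Hf].
  assert (Hlt : INR m < INR (Datatypes.S (length F))) by (rewrite S_INR; nra).
  apply INR_lt in Hlt. lia.
Qed.

Lemma translate_union_add_card {S : Type} (mul : S -> S -> S) (s : S) (G A : list S) (m : nat) :
  card_is (translate_union mul s G) m ->
  exists n, card_is (translate_union mul s (nodup deq (G ++ A))) n /\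
            (n <= m + 2 * length A)%nat.
Proof.
  intros [lG [_ [HPG HmG]]]. subst m.
  set (L := nodup deq (G ++ A) ++ map (mul s) (nodup deq (G ++ A))).
  exists (length (nodup deq L)). split.
  { apply card_is_of_list, translate_union_list. }
  assert (Hcover : incl (nodup deq L) (lG ++ A ++ map (mul s) A)).
  { intros x Hx. unfold L in Hx.
    rewrite nodup_In, in_app_iff, in_map_iff in Hx.
    rewrite !in_app_iff, in_map_iff.
    destruct Hx as [Hx | [y [<- Hy]]];
      rewrite nodup_In, in_app_iff in *.
    - destruct Hx as [Hx | Hx]; [left; apply HPG; left | right; left]; auto.
    - destruct Hy as [Hy | Hy].
      + left; apply HPG; right; exists y; auto.
      + right; right; exists y; auto. }
  pose proof (NoDup_incl_length (NoDup_nodup _ _) Hcover) as Hle.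
  rewrite !length_app, length_map in Hle. lia.
Qed.

Lemma folner_set_absorb {S : Type} (mul : S -> S -> S) (eps : R) (calF A G : list S) :
  0 < eps -> folner_set mul (eps / 2) calF G ->
  4 * INR (length A) <= eps * INR (length G) ->
  exists F, folner_set mul eps calF F /\ incl A F.
Proof.
  intros Heps [HnG [HneG HcG]] HA.
  set (G' := nodup deq (G ++ A)).
  assert (HGG' : incl G G')
    by (intros x Hx; unfold G'; rewrite nodup_In; apply in_or_app; auto).
  assert (Hlen : (length G <= length G')%nat) by (apply NoDup_incl_length; auto).
  exists G'. split.
  2:{ intros x Hx; unfold G'; rewrite nodup_In; apply in_or_app; auto. }
  split; [apply NoDup_nodup | split].
  { destruct G as [|g G0]; [congruence|]. intros E.
    specialize (HGG' g (or_introl eq_refl)). rewrite E in HGG'. destruct HGG'. }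
  intros s Hs. destruct (HcG s Hs) as [m [Hm Hle]].
  destruct (translate_union_add_card mul s G A m Hm) as [n [Hn Hnm]].
  exists n. split; [exact Hn|].
  apply le_INR in Hnm, Hlen. rewrite plus_INR, mult_INR in Hnm.
  assert (0 <= INR (length G)) by apply pos_INR.
  replace (INR 2) with 2 in Hnm by reflexivity. nra.
Qed.

Lemma choose_list {S : Type} (P : S -> S -> Prop) (l : list S) :
  (forall x, In x l -> exists y, P x y) ->
  exists U, forall x, In x l -> exists y, In y U /\ P x y.
Proof.
  induction l as [|a l IH]; intros H.
  - exists []. intros x [].
  - destruct (H a (or_introl eq_refl)) as [y Hy].
    destruct IH as [U HU]. { intros x Hx; apply H; right; auto. }
    exists (y :: U). intros x [<- | Hx].
    + exists y; split; [left|]; auto.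
    + destruct (HU x Hx) as [z [Hz Pz]]. exists z; split; [right|]; auto.
Qed.

Lemma infinite_orbit_escapes {S : Type} (mul : S -> S -> S) (g : S) (G : list S) :
  ~ is_finite (fun x => exists s, x = mul s g) -> exists u, ~ In (mul u g) G.
Proof.
  intros Hinf. apply NNPP. intros Hall. apply Hinf.
  exists (filter (fun x => if excluded_middle_informative (exists s, x = mul s g)
                           then true else false) G).
  intros x. rewrite filter_In.
  destruct excluded_middle_informative as [Hx | Hx]; split; try tauto.
  - intros _. destruct Hx as [s ->]. split; [|reflexivity].
    apply NNPP. intros Hc. apply Hall. exists s. exact Hc.
  - intros [_ Hf]. discriminate.
Qed.

Section GrowingInvariantSets.

Variables (S : Type) (mul : S -> S -> S).
Hypothesis folner : folner_condition mul.
Hypothesis infinite_orbits : forall a, ~ is_finite (fun x => exists s, x = mul s a).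

Variables (delta : R) (M : nat) (calF : list S).
Hypothesis delta_pos : 0 < delta.
Hypothesis delta_small : delta * INR M <= 1.

Definition large_folner_set : Prop :=
  exists F, folner_set mul delta calF F /\ (M <= length F)%nat.

Lemma grow_invariant_set (G : list S) :
  NoDup G -> invariant mul calF G ->
  large_folner_set \/
  exists G', NoDup G' /\ invariant mul calF G' /\ (length G < length G')%nat.
Proof.
  intros HnG HinvG.
  destruct (choose_list (fun g u => ~ In (mul u g) G) G
              (fun g _ => infinite_orbit_escapes mul g G (infinite_orbits g)))
    as [U HU].
  destruct (folner delta delta_pos (calF ++ U)) as [F HF].
  destruct (le_lt_dec M (length F)) as [HMF | HMF].
  { left. exists F. split; [|exact HMF].
    apply (folner_set_mono mul delta delta (calF ++ U)); [lra | apply incl_appl, incl_refl | exact HF]. }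
  right.
  assert (HinvF : invariant mul (calF ++ U) F).
  { apply (small_folner_set_invariant mul delta); [exact HF|].
    apply lt_INR in HMF. nra. }
  assert (Hnew : exists y, In y F /\ ~ In y G).
  { destruct HF as [_ [HneF _]]. destruct F as [|f0 F0]; [congruence|].
    destruct (classic (In f0 G)) as [Hf0 | Hf0].
    - destruct (HU f0 Hf0) as [u [HuU HuG]]. exists (mul u f0). split; [|exact HuG].
      apply HinvF; [apply in_or_app; right | left]; auto.
    - exists f0; split; [left|]; auto. }
  destruct Hnew as [y [HyF HyG]].
  exists (nodup deq (G ++ F)). split; [apply NoDup_nodup | split].
  - intros s g Hs Hg. rewrite nodup_In, in_app_iff in *.
    destruct Hg as [Hg | Hg]; [left; auto | right].
    apply HinvF; [apply in_or_app; left|]; auto.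
  - assert (Hlen : (length (y :: G) <= length (nodup deq (G ++ F)))%nat).
    { apply NoDup_incl_length; [constructor; auto|].
      intros x [<- | Hx]; rewrite nodup_In; apply in_or_app; auto. }
    simpl in Hlen. lia.
Qed.

Lemma invariant_sets_unbounded (k : nat) :
  large_folner_set \/
  exists G, NoDup G /\ invariant mul calF G /\ (k <= length G)%nat.
Proof.
  induction k as [|k [Hlarge | [G [HnG [HinvG HkG]]]]].
  - right. exists []. split; [constructor | split; [intros s g _ [] | lia]].
  - left. exact Hlarge.
  - destruct (grow_invariant_set G HnG HinvG) as [Hlarge | [G' [HnG' [HinvG' HG']]]].
    + left. exact Hlarge.
    + right. exists G'. repeat split; auto. lia.
Qed.

Lemma large_folner_set_exists : (0 < M)%nat -> large_folner_set.
Proof.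
  intros HM. destruct (invariant_sets_unbounded M) as [Hlarge | [G [HnG [HinvG HMG]]]];
    [exact Hlarge|].
  exists G. split; [|exact HMG].
  apply invariant_folner_set; [lra | exact HnG | | exact HinvG].
  destruct G; [simpl in HMG; lia | discriminate].
Qed.

End GrowingInvariantSets.

Lemma construction_parameters (eps : R) (n : nat) :
  0 < eps ->
  exists (M : nat) (delta : R), (0 < M)%nat /\ 0 < delta /\ delta <= eps / 2 /\
    delta * INR M <= 1 /\ 4 * INR n <= eps * INR M.
Proof.
  intros Heps.
  destruct (INR_unbounded (4 * INR n / eps)) as [M HM].
  assert (Hn : 0 <= INR n) by apply pos_INR.
  assert (Hinv : 0 < / eps) by (apply Rinv_0_lt_compat; exact Heps).
  assert (HM0 : (0 < M)%nat).
  { destruct M; [exfalso | lia]. simpl in HM. unfold Rdiv in HM. nra. }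
  assert (HMpos : 0 < INR M) by (apply lt_0_INR; exact HM0).
  exists M, (Rmin (eps / 2) (/ INR M)). repeat split.
  - exact HM0.
  - apply Rmin_glb_lt; [lra | apply Rinv_0_lt_compat; exact HMpos].
  - apply Rmin_l.
  - pose proof (Rmin_r (eps / 2) (/ INR M)) as Hr.
    apply (Rmult_le_compat_r (INR M)) in Hr; [|lra]. rewrite Rinv_l in Hr; lra.
  - replace (4 * INR n) with (eps * (4 * INR n / eps)) by (field; lra).
    apply Rmult_le_compat_l; lra.
Qed.

Theorem mainTheorem9 (S : Type) (mul : S -> S -> S)
  (mul_assoc : forall x y z, mul x (mul y z) = mul (mul x y) z) :
  folner_condition mul -> ~ proper_folner_condition mul ->
  exists a : S, is_finite (fun x => exists s, x = mul s a).
Proof.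
  intros Hfol Hnot_proper. apply NNPP. intros Hno_finite. apply Hnot_proper.
  assert (Hinf : forall a, ~ is_finite (fun x => exists s, x = mul s a))
    by (intros a Ha; apply Hno_finite; exists a; exact Ha).
  intros eps Heps calF A.
  destruct (construction_parameters eps (length A) Heps)
    as [M [delta [HM0 [Hdelta [Hdelta_eps [Hdelta_M HA]]]]]].
  destruct (large_folner_set_exists S mul Hfol Hinf delta M calF Hdelta Hdelta_M HM0)
    as [F [HF HMF]].
  apply (folner_set_absorb mul eps calF A F Heps).
  - apply (folner_set_mono mul delta (eps / 2) calF); [exact Hdelta_eps | apply incl_refl | exact HF].
  - apply le_INR in HMF. nra.
Qed.
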